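(* Let $\mathcal{C}$ be a full reflective subcategory of $\mathsf{Top}$, with reflection maps $r_Y:Y\to RY$, such that $\mathcal{C}$ contains a non-empty space that is finitely generated as an object of $\mathcal{C}$. Then for every directed diagram of monomorphisms in $\mathcal{C}$ with colimit $Z$ in $\mathsf{Top}$, the reflection map $r_Z:Z\to RZ$ is bijective.
   Context: A directed diagram is indexed by a directed poset (every finite subset has an upper bound). An object $X$ of $\mathcal{C}$ is finitely generated if for every directed diagram $(Z_i)_{i\in I}$ in $\mathcal{C}$ all of whose connecting morphisms $z_{i,j}$ are monomorphisms, with colimit cocone $c_i:Z_i\to Z$ in $\mathcal{C}$, every morphism $f:X\to Z$ factorizes as $f=c_i\cdot g$ for some $i$ and $g:X\to Z_i$, and if also $f=c_i\cdot g'$ then $z_{i,j}\cdot g=z_{i,j}\cdot g'$ for some connecting morphism $z_{i,j}$. *)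

From mathcomp Require Import all_boot all_order.
From mathcomp Require Import all_classical.
From mathcomp Require Import topology.
From Stdlib Require Lists.List.
Set Implicit Arguments. Unset Strict Implicit. Unset Printing Implicit Defensive.

(* A full subcategory of Top is given by a predicate on spaces; its
   morphisms are all continuous maps between spaces satisfying it. *)
Definition subcat := topologicalType -> Prop.

Definition directed_poset (I : Type) (le : rel I) : Prop :=
  [/\ reflexive le, antisymmetric le, transitive le &
      forall s : seq I, exists j, forall i, Stdlib.Lists.List.In i s -> le i j].

Definition is_diagram (I : Type) (le : rel I) (D : I -> topologicalType)
    (d : forall i j, le i j -> D i -> D j) : Prop :=
  [/\ (forall i j (h : le i j), continuous (d i j h)),
      (forall i (h : le i i) x, d i i h x = x) &
      (forall i j k (hij : le i j) (hjk : le j k) (hik : le i k) x,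
          d i k hik x = d j k hjk (d i j hij x))].

Definition is_cocone (I : Type) (le : rel I) (D : I -> topologicalType)
    (d : forall i j, le i j -> D i -> D j) (W : topologicalType)
    (c : forall i, D i -> W) : Prop :=
  (forall i, continuous (c i)) /\
  (forall i j (h : le i j) x, c j (d i j h x) = c i x).

(* Colimit cocone in the full subcategory P (universal among cocones
   with vertex in P).  Use P := fun _ => True for colimits in Top. *)
Definition is_colimit (P : subcat) (I : Type) (le : rel I)
    (D : I -> topologicalType) (d : forall i j, le i j -> D i -> D j)
    (Z : topologicalType) (c : forall i, D i -> Z) : Prop :=
  is_cocone d c /\
  forall (W : topologicalType), P W ->
  forall (e : forall i, D i -> W), is_cocone d e ->
  exists u : Z -> W,
    (continuous u /\ forall i x, u (c i x) = e i x) /\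
    forall u' : Z -> W, continuous u' -> (forall i x, u' (c i x) = e i x) ->
      forall z, u' z = u z.

Definition top_cat : subcat := fun _ => True.

Definition mono_in (C : subcat) (X Y : topologicalType) (f : X -> Y) : Prop :=
  forall W : topologicalType, C W ->
  forall g h : W -> X, continuous g -> continuous h ->
    (forall w, f (g w) = f (h w)) -> forall w, g w = h w.

Definition is_reflection (C : subcat) (R : topologicalType -> topologicalType)
    (r : forall Y : topologicalType, Y -> R Y) : Prop :=
  [/\ (forall Y, C (R Y)), (forall Y, continuous (r Y)) &
      forall (Y X : topologicalType), C X ->
      forall f : Y -> X, continuous f ->
      exists g : R Y -> X,
        (continuous g /\ forall y, g (r Y y) = f y) /\
        forall g' : R Y -> X, continuous g' -> (forall y, g' (r Y y) = f y) ->
          forall x, g' x = g x].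

Definition fin_gen (C : subcat) (X : topologicalType) : Prop :=
  forall (I : Type) (le : rel I), directed_poset le ->
  forall (D : I -> topologicalType) (d : forall i j, le i j -> D i -> D j),
  is_diagram d -> (forall i, C (D i)) ->
  (forall i j (h : le i j), mono_in C (d i j h)) ->
  forall (Z : topologicalType) (c : forall i, D i -> Z),
  C Z -> is_colimit C d c ->
  forall f : X -> Z, continuous f ->
    (exists i (g : X -> D i), continuous g /\ forall x, f x = c i (g x)) /\
    (forall i (g g' : X -> D i), continuous g -> continuous g' ->
       (forall x, f x = c i (g x)) -> (forall x, f x = c i (g' x)) ->
       exists j (h : le i j), forall x, d i j h (g x) = d i j h (g' x)).

(** The reflection of the Top-colimit [Z] of the diagram is its colimit in
    [C].  Mapping a non-empty finitely generated object [X] of [C] constantly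
    onto a point of [R Z] shows that every such point comes from some stage of
    the diagram, so [r_Z] is onto; mapping [X] constantly onto two stage points
    with the same image shows they already agree at a later stage, so their
    images in [Z] agree and [r_Z] is one-to-one. *)

From mathcomp Require Import all_boot all_order.
From mathcomp Require Import all_classical.
From mathcomp Require Import topology.

Local Open Scope classical_set_scope.

Lemma directed_common_ub {I : Type} {le : rel I} :
  directed_poset le -> forall i j, exists k, le i k /\ le j k.
Proof.
case=> _ _ _ ub i j; have [k hk] := ub [:: i; j].
by exists k; split; apply: hk; [left | right; left].
Qed.

(* The initial topology along a constant map is the indiscrete one. *)
Definition indiscrete_bool : topologicalType :=
  initial_topology (fun _ : bool => true).

Lemma continuous_to_indiscrete {X : topologicalType}
    (f : X -> indiscrete_bool) : continuous f.
Proof. by apply: continuous_comp_initial; apply: cst_continuous. Qed.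

Section TopColimit.

Context {I : Type} {le : rel I} {D : I -> topologicalType}.
Context {d : forall i j, le i j -> D i -> D j}.
Context {Z : topologicalType} {c : forall i, D i -> Z}.
Hypothesis colZ : is_colimit top_cat d c.

(* The indicator of the union of the images and the constant [true] are both
   cocone maps into [indiscrete_bool], so they agree. *)
Lemma top_colimit_cover z : exists i x, z = c i x.
Proof.
have [_ univZ] := colZ.
pose covered (z : Z) : indiscrete_bool := `[< exists i x, z = c i x >].
have cone_true : is_cocone d (fun i (_ : D i) => true : indiscrete_bool).
  by split=> [i|//]; apply: continuous_to_indiscrete.
have [u [_ u_uniq]] := univZ _ Logic.I _ cone_true.
have u_true :=
  u_uniq _ (continuous_to_indiscrete (fun=> true)) (fun _ _ => erefl) z.
have u_covered := u_uniq _ (continuous_to_indiscrete covered)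
  (fun i x => asboolT (ex_intro _ i (ex_intro _ x erefl))) z.
by apply/asboolP; rewrite /covered in u_covered; rewrite u_covered -u_true.
Qed.

Lemma top_colimit_cover_pair : directed_poset le ->
  forall z1 z2, exists k (a b : D k), z1 = c k a /\ z2 = c k b.
Proof.
move=> dirI z1 z2; have [[_ c_comp] _] := colZ.
have [i [a ->]] := top_colimit_cover z1.
have [j [b ->]] := top_colimit_cover z2.
have [k [hik hjk]] := directed_common_ub dirI i j.
by exists k, (d _ _ hik a), (d _ _ hjk b); rewrite !c_comp.
Qed.

Lemma reflection_colimit {C : subcat} {R : topologicalType -> topologicalType}
    {r : forall Y : topologicalType, Y -> R Y} :
  @is_reflection C R r -> is_colimit C d (fun i x => r Z (c i x)).
Proof.
case=> _ r_cont r_univ; have [[c_cont c_comp] univZ] := colZ.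
split.
  split=> [i|i j h x]; last by rewrite c_comp.
  by move=> x; apply: continuous_comp; [apply: c_cont | apply: r_cont].
move=> W CW e cone_e.
have [u [[u_cont u_c] u_uniq]] := univZ W Logic.I e cone_e.
have [g [[g_cont g_r] g_uniq]] := r_univ Z W CW u u_cont.
exists g; split; first by split=> // i x; rewrite g_r u_c.
move=> g' g'_cont g'_e; apply: g_uniq => // y.
apply: (u_uniq (g' \o r Z)) => // x.
by apply: continuous_comp; [apply: r_cont | apply: g'_cont].
Qed.

End TopColimit.

Section FinGenColimit.

Context {C : subcat} {I : Type} {le : rel I} {D : I -> topologicalType}.
Context {d : forall i j, le i j -> D i -> D j}.
Hypotheses (dirI : directed_poset le) (diagD : is_diagram d).
Hypothesis CD : forall i, C (D i).
Hypothesis d_mono : forall i j (h : le i j), mono_in C (d i j h).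
Context {W : topologicalType} {e : forall i, D i -> W}.
Hypotheses (CW : C W) (colW : is_colimit C d e).
Context {X : topologicalType}.
Variable x0 : X.
Hypothesis fgX : fin_gen C X.

Lemma fin_gen_colimit_cover w : exists i x, w = e i x.
Proof.
have [[i [g [_ eg]]] _] := fgX I le dirI D d diagD CD d_mono W e CW colW
  (fun=> w) (@cst_continuous _ _ w).
by exists i, (g x0).
Qed.

Lemma fin_gen_colimit_eq i (a b : D i) :
  e i a = e i b -> exists j (h : le i j), d i j h a = d i j h b.
Proof.
move=> eab; have [_ ess] := fgX I le dirI D d diagD CD d_mono W e CW colW
  (fun=> e i a) (@cst_continuous _ _ (e i a)).
have [j [h dab]] := ess i (fun=> a) (fun=> b) (@cst_continuous _ _ a)
  (@cst_continuous _ _ b) (fun=> erefl) (fun=> eab).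
by exists j, h; apply: dab x0.
Qed.

End FinGenColimit.

Theorem proposition3p4
  (C : subcat) (R : topologicalType -> topologicalType)
  (r : forall Y : topologicalType, Y -> R Y)
  (hR : @is_reflection C R r)
  (hfg : exists X : topologicalType, [/\ C X, inhabited X & fin_gen C X])
  (I : Type) (le : rel I) (hI : directed_poset le)
  (D : I -> topologicalType) (d : forall i j, le i j -> D i -> D j)
  (hD : is_diagram d) (hDC : forall i, C (D i))
  (hmono : forall i j (h : le i j), mono_in C (d i j h))
  (Z : topologicalType) (c : forall i, D i -> Z)
  (hZ : is_colimit top_cat d c) :
  bijective (r Z).
Proof.
have [X [_ [x0] fgX]] := hfg.
have CRZ : C (R Z) by case: hR.
have colRZ := reflection_colimit hZ hR.
have [[_ c_comp] _] := hZ.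
rewrite -setTT_bijective; split=> // [z1 z2 _ _ | p _].
  have [k [a [b [-> ->]]]] := top_colimit_cover_pair hZ hI z1 z2.
  case/(fin_gen_colimit_eq hI hD hDC hmono CRZ colRZ x0 fgX) => l [h dab].
  by rewrite -(c_comp _ _ h a) -(c_comp _ _ h b) dab.
have [i [x ->]] := fin_gen_colimit_cover hI hD hDC hmono CRZ colRZ x0 fgX p.
by exists (c i x).
Qed.
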